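(* Let $\mathcal X,\mathcal U$ be finite nonempty sets, $f:\mathcal X\times\mathcal U\to\mathcal X$ and $\ell_1,\ell_2:\mathcal X\to\mathbb R$, and let $$v_{\mathrm{RR}}^*(x)=\max_{\mathbf u\in\mathbb U}\min\Big\{\max_{\tau\in\mathbb N}\ell_1(\xi_x^{\mathbf u}(\tau)),\max_{\tau\in\mathbb N}\ell_2(\xi_x^{\mathbf u}(\tau))\Big\}.$$ Then there is an augmented policy $\bar\pi\in\overline\Pi$ such that for all $x\in\mathcal X$, $$v_{\mathrm{RR}}^*(x)=\min\Big\{\max_{\tau\in\mathbb N}\ell_1(\bar\xi_x^{\bar\pi}(\tau)),\max_{\tau\in\mathbb N}\ell_2(\bar\xi_x^{\bar\pi}(\tau))\Big\}.$$
   Context: $\mathbb N=\{0,1,\dots\}$; $\mathbb U$ is the set of sequences $\mathbb N\to\mathcal U$; for $\mathbf u\in\mathbb U$: $\xi_x^{\mathbf u}(0)=x$, $\xi_x^{\mathbf u}(t+1)=f(\xi_x^{\mathbf u}(t),\mathbf u(t))$. Let $\mathcal Y=\{\ell_1(x):x\in\mathcal X\}$, $\mathcal Z=\{\ell_2(x):x\in\mathcal X\}$ and $\overline\Pi$ the set of maps $\bar\pi:\mathcal X\times\mathcal Y\times\mathcal Z\to\mathcal U$. For $\bar\pi\in\overline\Pi$: $\bar\xi_x^{\bar\pi}(0)=x$, $\bar y_x^{\bar\pi}(0)=\ell_1(x)$, $\bar z_x^{\bar\pi}(0)=\ell_2(x)$, $\bar\xi_x^{\bar\pi}(t+1)=f\big(\bar\xi_x^{\bar\pi}(t),\bar\pi(\bar\xi_x^{\bar\pi}(t),\bar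 y_x^{\bar\pi}(t),\bar z_x^{\bar\pi}(t))\big)$, $\bar y_x^{\bar\pi}(t+1)=\max\{\ell_1(\bar\xi_x^{\bar\pi}(t+1)),\bar y_x^{\bar\pi}(t)\}$, $\bar z_x^{\bar\pi}(t+1)=\max\{\ell_2(\bar\xi_x^{\bar\pi}(t+1)),\bar z_x^{\bar\pi}(t)\}$. *)

From mathcomp Require Import all_boot all_order all_algebra.
From mathcomp Require Import boolp classical_sets reals.
Set Implicit Arguments. Unset Strict Implicit. Unset Printing Implicit Defensive.
Import Order.TTheory GRing.Theory Num.Theory.
Local Open Scope ring_scope.
Local Open Scope classical_set_scope.

Fixpoint traj (X U : Type) (f : X -> U -> X) (x : X) (u : nat -> U) (t : nat) : X :=
  match t with
  | 0 => x
  | t'.+1 => f (traj f x u t') (u t')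
  end.

Fixpoint aug_traj (R : realType) (X U : Type) (f : X -> U -> X) (l1 l2 : X -> R)
  (pib : X -> R -> R -> U) (x : X) (t : nat) : X * R * R :=
  match t with
  | 0 => (x, l1 x, l2 x)
  | t'.+1 =>
      let: (s, y, z) := aug_traj f l1 l2 pib x t' in
      let s' := f s (pib s y z) in
      (s', Num.max (l1 s') y, Num.max (l2 s') z)
  end.

(* max_{tau in N} l (traj tau): written as a supremum (it is attained, X finite) *)
Definition maxN (R : realType) (g : nat -> R) : R := sup (range g).

Definition vRR (R : realType) (X U : Type) (f : X -> U -> X) (l1 l2 : X -> R) (x : X) : R :=
  sup (range (fun u : nat -> U =>
    Num.min (maxN (fun t => l1 (traj f x u t))) (maxN (fun t => l2 (traj f x u t))))).

From mathcomp Require Import all_boot all_order all_algebra.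
From mathcomp Require Import boolp classical_sets reals.
Set Implicit Arguments. Unset Strict Implicit. Unset Printing Implicit Defensive.
Import Order.TTheory GRing.Theory Num.Theory.
Local Open Scope ring_scope.
Local Open Scope classical_set_scope.

(* Augment the state with the running maxima y and z of l1 and l2.  Along any
   trajectory min(y, z) is nondecreasing and eventually equals the objective
   of the control, so v*_RR(x) is the largest value W(p) of min(y, z)
   reachable from p = (x, l1 x, l2 x); W is attained because these values lie
   in a finite set.  From each augmented state p the policy plays the first
   action of a control reaching W(p) in the least number T(p) of steps: W never
   increases along a step, and this action preserves W while decreasing T, so
   the closed loop reaches min(y, z) >= W(p). *)

Section Extrema.
Variable R : realType.

Lemma sup_eq_max (E : set R) (m : R) : E m -> ubound E m -> sup E = m.
Proof.
move=> Em ubm; apply/eqP; rewrite eq_le ge_sup //=; last by exists m.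
exact: ub_le_sup (ex_intro _ m ubm) _ Em.
Qed.

Lemma finite_argmax {T : finType} (v : T -> R) {P : T -> Prop} :
  (exists i, P i) -> exists2 m, P m & forall i, P i -> v i <= v m.
Proof.
case=> i0 /asboolP Pi0.
case: (@arg_maxP _ _ _ i0 (fun i => `[< P i >]) v Pi0) => m /asboolP Pm maxm.
by exists m => // i Pi; apply/maxm/asboolP.
Qed.

Lemma maxN_attained {X : finType} (l : X -> R) (xi : nat -> X) :
  exists t0, maxN (fun t => l (xi t)) = l (xi t0) /\ forall t, l (xi t) <= l (xi t0).
Proof.
have [_ [t0 <-] maxt0] :=
  finite_argmax l (ex_intro (fun x => exists t, xi t = x) _ (ex_intro _ 0%N erefl)).
have ubt0 t : l (xi t) <= l (xi t0) by apply: maxt0; exists t.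
by exists t0; split => //; apply: sup_eq_max => [|_ [t _ <-]]; [exists t0 |].
Qed.

Section RunningMax.
Variables (X : finType) (l : X -> R) (xi : nat -> X) (y : nat -> R).
Hypothesis yS : forall t, y t.+1 = Num.max (l (xi t.+1)) (y t).
Hypothesis y0 : y 0%N = l (xi 0%N).

Lemma running_max_ge t : l (xi t) <= y t.
Proof. by case: t => [|t]; rewrite ?y0 // yS le_max lexx. Qed.

Lemma running_max_nondecreasing : {homo y : s t / (s <= t)%N >-> s <= t}.
Proof.
apply: homo_leq => [//|? ? ?|t]; first exact: le_trans.
by rewrite yS le_max lexx orbT.
Qed.

Lemma running_max_le_maxN t : y t <= maxN (fun t => l (xi t)).
Proof.
have [t0 [-> maxt0]] := maxN_attained l xi.
by elim: t => [|t IH]; rewrite ?y0 // yS ge_max maxt0.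
Qed.

Lemma running_max_eventually :
  exists T, forall t, (T <= t)%N -> y t = maxN (fun t => l (xi t)).
Proof.
have [t0 [maxE _]] := maxN_attained l xi.
exists t0 => t le_t0t; apply/le_anti; rewrite running_max_le_maxN maxE /=.
exact: le_trans (running_max_ge t0) (running_max_nondecreasing le_t0t).
Qed.

End RunningMax.
End Extrema.

Section AugmentedProblem.
Variables (R : realType) (X U : finType) (f : X -> U -> X) (l1 l2 : X -> R).

Local Notation state := (X * R * R)%type.

Definition aug_step (a : U) (p : state) : state :=
  let: (s, y, z) := p in
  let s' := f s a in (s', Num.max (l1 s') y, Num.max (l2 s') z).

Fixpoint aug_open (p : state) (u : nat -> U) (t : nat) : state :=
  if t is t'.+1 then aug_step (u t') (aug_open p u t') else p.

Definition aug_init (x : X) : state := (x, l1 x, l2 x).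

Definition aug_reward (p : state) : R := Num.min p.1.2 p.2.

Definition rr_payoff (x : X) (u : nat -> U) : R :=
  Num.min (maxN (fun t => l1 (traj f x u t))) (maxN (fun t => l2 (traj f x u t))).

Lemma aug_openS p u t :
  aug_open p u t.+1 = aug_open (aug_step (u 0%N) p) (fun k => u k.+1) t.
Proof. by elim: t => [|t IH] //=; rewrite -IH. Qed.

Lemma aug_open_traj x u t : (aug_open (aug_init x) u t).1.1 = traj f x u t.
Proof. by elim: t => [|t /= <-] //; case: aug_open => [[]]. Qed.

Lemma aug_openS_y x u t :
  (aug_open (aug_init x) u t.+1).1.2 =
  Num.max (l1 (traj f x u t.+1)) (aug_open (aug_init x) u t).1.2.
Proof. by rewrite -aug_open_traj /=; case: aug_open => [[]]. Qed.

Lemma aug_openS_z x u t :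
  (aug_open (aug_init x) u t.+1).2 =
  Num.max (l2 (traj f x u t.+1)) (aug_open (aug_init x) u t).2.
Proof. by rewrite -aug_open_traj /=; case: aug_open => [[]]. Qed.

Lemma aug_reward_le_rr_payoff x u t :
  aug_reward (aug_open (aug_init x) u t) <= rr_payoff x u.
Proof.
by rewrite le_min !ge_min (running_max_le_maxN (aug_openS_y x u))
           ?(running_max_le_maxN (aug_openS_z x u)) ?orbT.
Qed.

Lemma aug_reward_eventually_rr_payoff x u :
  exists T, aug_reward (aug_open (aug_init x) u T) = rr_payoff x u.
Proof.
have [T1 eq1] := running_max_eventually (aug_openS_y x u) erefl.
have [T2 eq2] := running_max_eventually (aug_openS_z x u) erefl.
by exists (maxn T1 T2); rewrite /aug_reward eq1 ?leq_maxl // eq2 ?leq_maxr.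
Qed.

(* The running maxima only ever keep their initial value or take a value of
   l1, resp. l2, so the rewards reachable from p lie in this finite family. *)
Definition aug_reward_candidate (p : state) (o : option X * option X) : R :=
  Num.min (oapp l1 p.1.2 o.1) (oapp l2 p.2 o.2).

Lemma aug_reward_is_candidate p u t :
  exists o, aug_reward (aug_open p u t) = aug_reward_candidate p o.
Proof.
suff [o1 [o2 [eq1 eq2]]] : exists o1 o2, (aug_open p u t).1.2 = oapp l1 p.1.2 o1 /\
                                          (aug_open p u t).2 = oapp l2 p.2 o2.
  by exists (o1, o2); rewrite /aug_reward /aug_reward_candidate eq1 eq2.
elim: t => [|t [o1 [o2]]]; first by exists None, None.
rewrite /=; case: aug_open => [[s y] z] /= [-> ->]; set s' := f s (u t).
rewrite !maxEle; case: ifP => _; case: ifP => _.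
- by exists o1, o2.
- by exists o1, (Some s').
- by exists (Some s'), o2.
- by exists (Some s'), (Some s').
Qed.

Variable u0 : U.

Lemma aug_reward_has_max p :
  exists2 w, (exists u t, aug_reward (aug_open p u t) = w) &
             forall u t, aug_reward (aug_open p u t) <= w.
Proof.
have [o [u [t eq_o]] max_o] := finite_argmax (aug_reward_candidate p)
  (ex_intro (fun o => exists u t, aug_reward (aug_open p u t) = aug_reward_candidate p o)
     (None, None) (ex_intro _ (fun=> u0) (ex_intro _ 0%N erefl))).
exists (aug_reward_candidate p o); first by exists u, t.
move=> v s; have [o' eq_o'] := aug_reward_is_candidate p v s.
by rewrite eq_o'; apply: max_o; exists v, s.
Qed.

Definition aug_value (p : state) : R :=
  sup (range (fun ut : (nat -> U) * nat => aug_reward (aug_open p ut.1 ut.2))).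

Lemma aug_valueP p :
  (exists u t, aug_reward (aug_open p u t) = aug_value p) /\
  forall u t, aug_reward (aug_open p u t) <= aug_value p.
Proof.
have [w [u [t eq_w]] max_w] := aug_reward_has_max p.
suff -> : aug_value p = w by split => //; exists u, t.
by apply: sup_eq_max => [|_ [[v s] _ <-]]; [exists (u, t) | exact: max_w].
Qed.

Lemma aug_value_step_le a p : aug_value (aug_step a p) <= aug_value p.
Proof.
have [[u [t <-]] _] := aug_valueP (aug_step a p).
pose v k := if k is k'.+1 then u k' else a.
by have := (aug_valueP p).2 v t.+1; rewrite aug_openS.
Qed.

Lemma rr_payoff_le_aug_value x u : rr_payoff x u <= aug_value (aug_init x).
Proof.
have [T <-] := aug_reward_eventually_rr_payoff x u; exact: (aug_valueP _).2.
Qed.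

Lemma vRR_aug_value x : vRR f l1 l2 x = aug_value (aug_init x).
Proof.
apply: sup_eq_max => [|_ [u _ <-]]; last exact: rr_payoff_le_aug_value.
have [[u [t reward_u]] _] := aug_valueP (aug_init x).
exists u => //; apply/le_anti; rewrite rr_payoff_le_aug_value -reward_u.
exact: aug_reward_le_rr_payoff.
Qed.

Lemma opt_time_ex p :
  exists n, `[< exists u, aug_reward (aug_open p u n) = aug_value p >].
Proof.
by have [[u [t reward_u]] _] := aug_valueP p; exists t; apply/asboolP; exists u.
Qed.

Definition opt_time p := ex_minn (opt_time_ex p).

Lemma opt_timeP p : exists u, aug_reward (aug_open p u (opt_time p)) = aug_value p.
Proof. by rewrite /opt_time; case: ex_minnP => n /asboolP. Qed.

Lemma opt_time_min p u n :
  aug_reward (aug_open p u n) = aug_value p -> (opt_time p <= n)%N.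
Proof.
move=> reward_u; rewrite /opt_time; case: ex_minnP => m _.
by apply; apply/asboolP; exists u.
Qed.

Definition opt_control p : nat -> U := projT1 (cid (opt_timeP p)).

Lemma opt_controlP p :
  aug_reward (aug_open p (opt_control p) (opt_time p)) = aug_value p.
Proof. exact: projT2 (cid (opt_timeP p)). Qed.

Definition aug_policy (p : state) : U := opt_control p 0%N.

Definition aug_closed (p : state) (t : nat) : state :=
  iter t (fun q => aug_step (aug_policy q) q) p.

Lemma aug_closed_open p t :
  aug_closed p t = aug_open p (fun k => aug_policy (aug_closed p k)) t.
Proof. by elim: t => //= t <-. Qed.

Lemma aug_traj_closed x t :
  aug_traj f l1 l2 (fun s y z => aug_policy (s, y, z)) x t = aug_closed (aug_init x) t.
Proof. by elim: t => //= t ->; case: aug_closed => [[]]. Qed.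

Lemma aug_policy_step p k :
  opt_time p = k.+1 ->
  aug_value (aug_step (aug_policy p) p) = aug_value p /\
  (opt_time (aug_step (aug_policy p) p) <= k)%N.
Proof.
move=> Dp; have := opt_controlP p; rewrite Dp aug_openS -/(aug_policy p).
set q := aug_step _ p => reward_q.
have value_q : aug_value q = aug_value p.
  by apply/le_anti; rewrite aug_value_step_le -reward_q (aug_valueP q).2.
by split=> //; apply: opt_time_min (etrans reward_q (esym value_q)).
Qed.

Lemma aug_closed_reaches_value p : exists t, aug_value p <= aug_reward (aug_closed p t).
Proof.
move Dn: (opt_time p) => n; elim/ltn_ind: n p Dn => -[|k] IH p Dp.
  by exists 0%N; rewrite -(opt_controlP p) Dp.
have [value_q le_qk] := aug_policy_step Dp.
have [t reach_q] := IH _ (leq_ltn_trans le_qk (ltnSn k)) _ erefl.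
by exists t.+1; rewrite -value_q /aug_closed iterSr.
Qed.

Theorem aug_policy_optimal x :
  vRR f l1 l2 x =
  Num.min
    (maxN (fun t => l1 (aug_traj f l1 l2 (fun s y z => aug_policy (s, y, z)) x t).1.1))
    (maxN (fun t => l2 (aug_traj f l1 l2 (fun s y z => aug_policy (s, y, z)) x t).1.1)).
Proof.
pose u_cl k := aug_policy (aug_closed (aug_init x) k).
transitivity (rr_payoff x u_cl); last first.
  congr (Num.min (maxN _) (maxN _)); apply/funext => t;
  by rewrite aug_traj_closed aug_closed_open aug_open_traj.
rewrite vRR_aug_value; apply/le_anti; rewrite rr_payoff_le_aug_value andbT.
have [t reach] := aug_closed_reaches_value (aug_init x).
by apply: le_trans reach _; rewrite aug_closed_open; exact: aug_reward_le_rr_payoff.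
Qed.

End AugmentedProblem.

Theorem mainTheorem16 (R : realType) (X U : finType)
  (hX : (0 < #|X|)%N) (hU : (0 < #|U|)%N)
  (f : X -> U -> X) (l1 l2 : X -> R) :
  exists pib : X -> R -> R -> U,
    forall x : X,
      vRR f l1 l2 x =
      Num.min (maxN (fun t => l1 (aug_traj f l1 l2 pib x t).1.1))
              (maxN (fun t => l2 (aug_traj f l1 l2 pib x t).1.1)).
Proof.
have /card_gt0P [u0 _] := hU.
by exists (fun s y z => aug_policy f l1 l2 u0 (s, y, z)) => x; exact: aug_policy_optimal.
Qed.
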